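(* Let $\mathcal{X}=\{1,\dots,n\}$, let $\pi$ be a strictly positive probability distribution on $\mathcal{X}$, let $P$ be a $\pi$-reversible transition matrix, let $G$ be the Gibbs kernel induced by a partition $\mathcal{X}=\bigsqcup_{i=1}^k\mathcal{O}_i$, and for $\alpha\in[0,1]$ let $A_\alpha=\alpha P+(1-\alpha)G$. Assume the partition is such that $\operatorname{Tr}(\overline{P})=0$. Then $\operatorname*{argmin}_{\alpha\in[0,1]}\|A_\alpha-\Pi\|_{F,\pi}^2=\{\alpha^*\}$ with $\alpha^*=\dfrac{k}{\operatorname{Tr}(P^2)+k}$.
   Context: $\pi$-reversible means $\pi(x)P(x,y)=\pi(y)P(y,x)$. Gibbs kernel: $G(x,y)=\pi(y)/\pi(\mathcal{O}(x))$ if $y\in\mathcal{O}(x)$ and $0$ otherwise, $\mathcal{O}(x)$ the block containing $x$, $\pi(\mathcal{O})=\sum_{z\in\mathcal{O}}\pi(z)$. Projection chain: $\overline{P}(i,j)=\frac{1}{\pi(\mathcal{O}_i)}\sum_{x\in\mathcal{O}_i,\,y\in\mathcal{O}_j}\pi(x)P(x,y)$. $\Pi$ is the matrix with every row equal to $\pi$; $\|M\|_{F,\pi}^2=\operatorname{Tr}(M^*M)$ with $M^*(x,y)=\pi(y)M(y,x)/\pi(x)$. *)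

From mathcomp Require Import all_boot all_order all_algebra.
Set Implicit Arguments. Unset Strict Implicit. Unset Printing Implicit Defensive.
Import Order.TTheory GRing.Theory Num.Theory.
Local Open Scope ring_scope.

Definition prob_dist (R : realFieldType) (n : nat) (pi : 'I_n -> R) : Prop :=
  (forall x, 0 < pi x) /\ \sum_x pi x = 1.

Definition transition_matrix (R : realFieldType) (n : nat) (P : 'M[R]_n) : Prop :=
  (forall x y, 0 <= P x y) /\ (forall x, \sum_y P x y = 1).

Definition reversible (R : realFieldType) (n : nat) (pi : 'I_n -> R) (P : 'M[R]_n) : Prop :=
  forall x y, pi x * P x y = pi y * P y x.

(* A partition of 'I_n into k nonempty blocks O_1..O_k, given by the block
   map blk : x |-> index of the block containing x (surjective). *)
Definition partition_map (n k : nat) (blk : 'I_n -> 'I_k) : Prop :=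
  forall i : 'I_k, exists x, blk x = i.

Definition block_mass (R : realFieldType) (n k : nat) (pi : 'I_n -> R)
  (blk : 'I_n -> 'I_k) (i : 'I_k) : R :=
  \sum_(z | blk z == i) pi z.

Definition gibbs_kernel (R : realFieldType) (n k : nat) (pi : 'I_n -> R)
  (blk : 'I_n -> 'I_k) : 'M[R]_n :=
  \matrix_(x, y) (if blk y == blk x then pi y / block_mass pi blk (blk x) else 0).

Definition proj_chain (R : realFieldType) (n k : nat) (pi : 'I_n -> R)
  (blk : 'I_n -> 'I_k) (P : 'M[R]_n) : 'M[R]_k :=
  \matrix_(i, j) ((block_mass pi blk i)^-1 *
     \sum_(x | blk x == i) \sum_(y | blk y == j) pi x * P x y).

Definition Pi_mat (R : realFieldType) (n : nat) (pi : 'I_n -> R) : 'M[R]_n :=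
  \matrix_(x, y) pi y.

Definition pi_adj (R : realFieldType) (n : nat) (pi : 'I_n -> R) (M : 'M[R]_n) : 'M[R]_n :=
  \matrix_(x, y) (pi y * M y x / pi x).

Definition frob_pi_sq (R : realFieldType) (n : nat) (pi : 'I_n -> R) (M : 'M[R]_n) : R :=
  \tr (pi_adj pi M *m M).

(* Expand the squared norm by bilinearity of the pi-weighted inner product
   <M, N> = Tr(M^* N).  For a pi-reversible M one has <M, N> = Tr(M N); the
   rows of P, G and Pi are probability vectors, so every pairing with Pi is 1;
   G is idempotent with trace k, and Tr(P G) = Tr(Pbar) = 0.  Hence
   F(a) = a^2 Tr(P^2) + (1 - a)^2 k - 1 with Tr(P^2) = <P, P> >= 0, a strictly
   convex quadratic whose unique minimiser k / (Tr(P^2) + k) lies in [0, 1]. *)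

From mathcomp Require Import all_boot all_order all_algebra.
From mathcomp Require Import ring lra.
Set Implicit Arguments. Unset Strict Implicit. Unset Printing Implicit Defensive.
Import Order.TTheory GRing.Theory Num.Theory.
Local Open Scope ring_scope.

Section FrobeniusPi.
Variables (R : realFieldType) (n : nat) (pi : 'I_n -> R).

Definition frob_pi_dot (M N : 'M[R]_n) : R := \tr (pi_adj pi M *m N).

Lemma frob_pi_dotE M N :
  frob_pi_dot M N = \sum_x \sum_y pi y * M y x / pi x * N y x.
Proof.
by apply: eq_bigr => x _; rewrite mxE; apply: eq_bigr => y _; rewrite !mxE.
Qed.

Lemma frob_pi_sqE M : frob_pi_sq pi M = frob_pi_dot M M.
Proof. by []. Qed.

Lemma frob_pi_dotC M N : frob_pi_dot M N = frob_pi_dot N M.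
Proof.
by rewrite !frob_pi_dotE; apply: eq_bigr => x _; apply: eq_bigr => y _; ring.
Qed.

Lemma pi_adjD M N : pi_adj pi (M + N) = pi_adj pi M + pi_adj pi N.
Proof. by apply/matrixP => x y; rewrite !mxE mulrDr mulrDl. Qed.

Lemma pi_adjZ c M : pi_adj pi (c *: M) = c *: pi_adj pi M.
Proof. by apply/matrixP => x y; rewrite !mxE mulrCA !mulrA. Qed.

Lemma frob_pi_dotDl M N L :
  frob_pi_dot (M + N) L = frob_pi_dot M L + frob_pi_dot N L.
Proof. by rewrite /frob_pi_dot pi_adjD mulmxDl mxtraceD. Qed.

Lemma frob_pi_dotZl c M N : frob_pi_dot (c *: M) N = c * frob_pi_dot M N.
Proof. by rewrite /frob_pi_dot pi_adjZ -scalemxAl mxtraceZ. Qed.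

Lemma frob_pi_dotNl M N : frob_pi_dot (- M) N = - frob_pi_dot M N.
Proof. by rewrite -scaleN1r frob_pi_dotZl mulN1r. Qed.

Lemma frob_pi_dotDr M N L :
  frob_pi_dot M (N + L) = frob_pi_dot M N + frob_pi_dot M L.
Proof. by rewrite ![frob_pi_dot M _]frob_pi_dotC frob_pi_dotDl. Qed.

Lemma frob_pi_dotZr c M N : frob_pi_dot M (c *: N) = c * frob_pi_dot M N.
Proof. by rewrite ![frob_pi_dot M _]frob_pi_dotC frob_pi_dotZl. Qed.

Lemma frob_pi_dotNr M N : frob_pi_dot M (- N) = - frob_pi_dot M N.
Proof. by rewrite ![frob_pi_dot M _]frob_pi_dotC frob_pi_dotNl. Qed.

Lemma frob_pi_sq_lincomb a b M N L :
  frob_pi_sq pi (a *: M + b *: N - L) =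
    a ^+ 2 * frob_pi_dot M M + b ^+ 2 * frob_pi_dot N N + frob_pi_dot L L
    + 2 * a * b * frob_pi_dot M N
    - 2 * a * frob_pi_dot M L - 2 * b * frob_pi_dot N L.
Proof.
rewrite frob_pi_sqE !(frob_pi_dotDl, frob_pi_dotDr, frob_pi_dotNl,
  frob_pi_dotNr, frob_pi_dotZl, frob_pi_dotZr).
rewrite (frob_pi_dotC N M) (frob_pi_dotC L M) (frob_pi_dotC L N); ring.
Qed.

Hypothesis pi_gt0 : forall x, 0 < pi x.

Lemma frob_pi_sq_ge0 M : 0 <= frob_pi_sq pi M.
Proof.
rewrite frob_pi_sqE frob_pi_dotE.
apply: sumr_ge0 => x _; apply: sumr_ge0 => y _.
have -> : pi y * M y x / pi x * M y x = pi y / pi x * M y x ^+ 2 by ring.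
by rewrite mulr_ge0 ?divr_ge0 ?sqr_ge0 ?ltW.
Qed.

Lemma frob_pi_dot_reversible M N :
  reversible pi M -> frob_pi_dot M N = \tr (M *m N).
Proof.
move=> M_rev; rewrite frob_pi_dotE; apply: eq_bigr => x _; rewrite mxE.
by apply: eq_bigr => y _; rewrite M_rev [pi x * _]mulrC mulfK // gt_eqF.
Qed.

Hypothesis pi_sum1 : \sum_x pi x = 1.

Lemma frob_pi_dot_Pi_mat (M : 'M[R]_n) :
  (forall x, \sum_y M x y = 1) -> frob_pi_dot M (Pi_mat pi) = 1.
Proof.
move=> M_row; rewrite frob_pi_dotE exchange_big /= -pi_sum1.
apply: eq_bigr => y _; rewrite -[RHS]mulr1 -(M_row y) mulr_sumr.
by apply: eq_bigr => x _; rewrite mxE divfK ?gt_eqF.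
Qed.

Lemma Pi_mat_row_sum x : \sum_y Pi_mat pi x y = 1.
Proof. by rewrite -pi_sum1; apply: eq_bigr => y _; rewrite mxE. Qed.

End FrobeniusPi.

Section GibbsKernel.
Variables (R : realFieldType) (n k : nat) (pi : 'I_n -> R) (blk : 'I_n -> 'I_k).
Hypothesis pi_gt0 : forall x, 0 < pi x.

Local Notation G := (gibbs_kernel pi blk).
Local Notation mass := (block_mass pi blk).

Lemma block_mass_blk_gt0 x : 0 < mass (blk x).
Proof.
rewrite /block_mass (bigD1 x) //= ltr_pwDl //.
by apply: sumr_ge0 => y _; apply: ltW.
Qed.

Lemma gibbs_kernel_row_sum x : \sum_y G x y = 1.
Proof.
rewrite -(divff (lt0r_neq0 (block_mass_blk_gt0 x))) [in RHS]/block_mass.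
by rewrite mulr_suml [RHS]big_mkcond; apply: eq_bigr => y _; rewrite mxE.
Qed.

Lemma gibbs_kernel_reversible : reversible pi G.
Proof.
move=> x y; rewrite !mxE eq_sym; case: eqP => [->|_]; last by rewrite !mulr0.
by rewrite mulrCA.
Qed.

Lemma gibbs_kernel_blk x y z : blk x = blk y -> G x z = G y z.
Proof. by move=> xy; rewrite !mxE xy. Qed.

Lemma gibbs_kernel_idem : G *m G = G.
Proof.
apply/matrixP => x z; rewrite mxE -[RHS]mul1r -(gibbs_kernel_row_sum x).
rewrite mulr_suml.
apply: eq_bigr => y _; have [xy|] := eqVneq (blk y) (blk x).
  by rewrite (gibbs_kernel_blk z xy).
by rewrite mxE => /negbTE ->; rewrite !mul0r.
Qed.

Hypothesis blk_surj : partition_map blk.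

Lemma mxtrace_gibbs_kernel : \tr G = k%:R.
Proof.
rewrite /mxtrace (partition_big blk predT) //= -[k in RHS]card_ord -sumr_const.
apply: eq_bigr => i _; have [x <-] := blk_surj i.
rewrite -(divff (lt0r_neq0 (block_mass_blk_gt0 x))) [in RHS]/block_mass.
by rewrite mulr_suml; apply: eq_bigr => y /eqP yx; rewrite mxE yx eqxx.
Qed.

Lemma mxtrace_mul_gibbs_kernel M : \tr (M *m G) = \tr (proj_chain pi blk M).
Proof.
rewrite /mxtrace (partition_big blk predT) //=; apply: eq_bigr => i _.
rewrite mxE mulr_sumr; apply: eq_bigr => x /eqP xi; rewrite mxE mulr_sumr.
rewrite [RHS]big_mkcond; apply: eq_bigr => y _; rewrite mxE xi eq_sym.
by case: eqP => [->|_]; rewrite ?mulr0 // mulrC mulrAC mulrC.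
Qed.

End GibbsKernel.

Lemma quadratic_argmin (R : realFieldType) (T K c : R) (f : R -> R) :
  0 <= T -> 0 < K -> (forall b, f b = b ^+ 2 * T + (1 - b) ^+ 2 * K + c) ->
  forall a, (0 <= a <= 1 /\ (forall b, 0 <= b <= 1 -> f a <= f b)) <->
            a = K / (T + K).
Proof.
move=> T_ge0 K_gt0 fE a; set astar := K / (T + K).
have TK_gt0 : 0 < T + K by lra.
have f_sq b : f b = (T + K) * (b - astar) ^+ 2 + f astar.
  by rewrite !fE /astar; field; rewrite lt0r_neq0.
have astar01 : 0 <= astar <= 1.
  rewrite /astar divr_ge0 ?(ltW K_gt0) ?(ltW TK_gt0) //=.
  by rewrite ler_pdivrMr // mul1r lerDr.
split=> [[_ a_min] | ->].
  have : (a - astar) ^+ 2 <= 0.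
    rewrite -(pmulr_rle0 _ TK_gt0).
    by have := a_min _ astar01; rewrite f_sq; lra.
  by rewrite le_eqVlt ltNge sqr_ge0 orbF sqrf_eq0 subr_eq0 => /eqP.
split=> // b _; rewrite (f_sq b) lerDr.
by rewrite mulr_ge0 ?sqr_ge0 ?ltW.
Qed.

Theorem proposition4p7 (R : realFieldType) (n k : nat) (pi : 'I_n -> R)
  (P : 'M[R]_n) (blk : 'I_n -> 'I_k) :
  prob_dist pi -> transition_matrix P -> reversible pi P ->
  partition_map blk ->
  \tr (proj_chain pi blk P) = 0 ->
  let G := gibbs_kernel pi blk in
  let F := fun a : R => frob_pi_sq pi (a *: P + (1 - a) *: G - Pi_mat pi) in
  let astar := k%:R / (\tr (P *m P) + k%:R) in
  forall a : R,
    ((0 <= a <= 1) /\ (forall b : R, 0 <= b <= 1 -> F a <= F b)) <-> a = astar.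
Proof.
move=> [pi_gt0 pi_sum1] [_ P_row] P_rev blk_surj trPbar0 G F astar.
have k_gt0 : 0 < k%:R :> R.
  rewrite ltr0n lt0n; apply: contra_eqN pi_sum1 => /eqP k0.
  by rewrite big1 1?eq_sym ?oner_eq0 // => x; case: (blk x); rewrite k0.
have G_rev : reversible pi G := gibbs_kernel_reversible pi blk.
have G_row : forall x, \sum_y G x y = 1 := gibbs_kernel_row_sum blk pi_gt0.
have Pi_row : forall x, \sum_y Pi_mat pi x y = 1 := Pi_mat_row_sum pi_sum1.
have trPP_ge0 : 0 <= \tr (P *m P).
  by rewrite -(frob_pi_dot_reversible pi_gt0 P P_rev) frob_pi_sq_ge0.
apply: (quadratic_argmin (c := -1)) trPP_ge0 k_gt0 _ => b.
rewrite /F frob_pi_sq_lincomb !frob_pi_dot_Pi_mat //.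
rewrite !frob_pi_dot_reversible // /G gibbs_kernel_idem //.
rewrite (mxtrace_gibbs_kernel pi_gt0 blk_surj) mxtrace_mul_gibbs_kernel trPbar0.
ring.
Qed.
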